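(* (i) The formal series $\Lambda(\lambda^{(0)},\nu^{(0)})$ and $\mathcal N(\lambda^{(0)},\nu^{(0)})$ (expanded in $\eta^{-1}$) coincide respectively with $\lambda^{(0)}(t,c-\eta^{-1},\eta)$ and $\nu^{(0)}(t,c-\eta^{-1},\eta)$, the 0-parameter solution of $(H_{\rm II})$ with $c$ replaced by $c-\eta^{-1}$ (re-expanded in $\eta^{-1}$, with the same leading term $\lambda_0(t,c)$). (ii) The formal solution $R$ satisfies $$R(t,c,\eta)-R(t,c-\eta^{-1},\eta)=-\frac{d}{dt}\log\Big\{1+\big(c-\tfrac12\eta^{-1}\big)\frac{\eta^{-1}R(t,c,\eta)-2\lambda^{(0)}(t,c,\eta)}{\big(\nu^{(0)}(t,c,\eta)-\lambda^{(0)}(t,c,\eta)^2-\frac12t\big)^2}\Big\},$$ where $R(t,c-\eta^{-1},\eta)$ is the corresponding formal Riccati solution for the parameter $c-\eta^{-1}$ (re-expanded in $\eta^{-1}$).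
   Context: Let $\eta$ be a large parameter, $c\in\mathbb C\setminus\{0\}$. $(H_{\rm II})$: $\frac{d\lambda}{dt}=\eta\nu$, $\frac{d\nu}{dt}=\eta(2\lambda^3+t\lambda+c)$. Let $\lambda_0(t,c)$ be a branch of the algebraic function $2\lambda_0^3+t\lambda_0+c=0$. The 0-parameter solution is the unique pair of formal power series $\lambda^{(0)}=\sum_{k\ge0}\eta^{-k}\lambda^{(0)}_k(t,c)$, $\nu^{(0)}=\sum_{k\ge0}\eta^{-k}\nu^{(0)}_k(t,c)$ solving $(H_{\rm II})$ formally with $\lambda^{(0)}_0=\lambda_0$, $\nu^{(0)}_0=0$. Set $\Delta=6\lambda_0^2+t$. Let $R=\sum_{k\ge-1}\eta^{-k}R_k$ be the formal solution of $R^2+\frac{dR}{dt}=\eta^2(6(\lambda^{(0)})^2+t)$ with $R_{-1}=\sqrt\Delta$ (fixed branch). The Bäcklund transformation is $\Lambda(\lambda,\nu)=-\lambda+\frac{c-\frac12\eta^{-1}}{\nu-\lambda^2-\frac12t}$, $\mathcal N(\lambda,\nu)=-\nu+\frac{2(c-\frac12\eta^{-1})\lambda}{\nu-\lambda^2-\frac12t}-\Big(\frac{c-\frac12\eta^{-1}}{\nu-\lambda^2-\frac12t}\Big)^2$; it maps solutions of $(H_{\rm II})$ to solutions of the same system with $c$ replaced by $c-\eta^{-1}$. *)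

(* Formal power series in eps = eta^{-1} with coefficients in
   an abstract differential field K (a field of "functions of (t,c)") equipped
   with the two commuting derivations d/dt and d/dc. *)
From HB Require Import structures.
From mathcomp Require Import all_boot all_order all_algebra.
Set Implicit Arguments. Unset Strict Implicit. Unset Printing Implicit Defensive.
Import Order.TTheory GRing.Theory Num.Theory.
Local Open Scope ring_scope.

Definition is_derivation (K : fieldType) (D : K -> K) : Prop :=
  (forall x y, D (x + y) = D x + D y) /\ (forall x y, D (x * y) = D x * y + x * D y).

Definition fps (K : fieldType) := nat -> K.

Section FPS.
Variable K : fieldType.

Definition feq (f g : fps K) : Prop := forall n, f n = g n.

Definition fC (a : K) : fps K := fun n => if n is 0 then a else 0.
Definition feps : fps K := fun n => if n == 1%N then 1 else 0.
Definition fadd (f g : fps K) : fps K := fun n => f n + g n.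
Definition fopp (f : fps K) : fps K := fun n => - f n.
Definition fsub (f g : fps K) : fps K := fun n => f n - g n.
Definition fmul (f g : fps K) : fps K :=
  fun n => \sum_(i < n.+1) f i * g (n - i)%N.
Definition fder (D : K -> K) (f : fps K) : fps K := fun n => D (f n).

(* multiplicative inverse of a series (meaningful when f 0 != 0):
   g 0 = (f 0)^-1,  g n = - (f 0)^-1 * sum_(i<n) f (n-i) * g i *)
Fixpoint finv_seq (f : fps K) (n : nat) : seq K :=
  match n with
  | 0 => [:: (f 0%N)^-1]
  | m.+1 => let s := finv_seq f m in
            rcons s (- (f 0%N)^-1 * \sum_(i < m.+1) f (m.+1 - i)%N * nth 0 s i)
  end.
Definition finv (f : fps K) : fps K := fun n => nth 0 (finv_seq f n) n.

(* re-expansion of f(t, c - eps) in powers of eps, where Dc = d/dc: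
   sum_k eps^k f_k(t, c - eps) = sum_k eps^k sum_j (-eps)^j/j! Dc^j f_k *)
Definition fshift (Dc : K -> K) (f : fps K) : fps K :=
  fun n => \sum_(k < n.+1)
     ((-1) ^+ (n - k)%N / ((n - k)`!)%:R) * iter (n - k)%N Dc (f k).

Definition Qden (t : K) (lam nu : fps K) : fps K :=
  fsub (fsub nu (fmul lam lam)) (fC (t / 2%:R)).
Definition chalf (c : K) : fps K := fsub (fC c) (fmul (fC (2%:R^-1)) feps).

Definition BLam (t c : K) (lam nu : fps K) : fps K :=
  fadd (fopp lam) (fmul (chalf c) (finv (Qden t lam nu))).
Definition BNu (t c : K) (lam nu : fps K) : fps K :=
  let w := fmul (chalf c) (finv (Qden t lam nu)) in
  fsub (fadd (fopp nu) (fmul (fC 2%:R) (fmul w lam))) (fmul w w).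

(* the argument of the log in (ii), with S = eta^{-1} R *)
Definition Farg (t c : K) (lam nu S : fps K) : fps K :=
  fadd (fC 1) (fmul (chalf c)
     (fmul (fsub S (fmul (fC 2%:R) lam))
           (finv (fmul (Qden t lam nu) (Qden t lam nu))))).

Definition fdlog (Dt : K -> K) (F : fps K) : fps K := fmul (fder Dt F) (finv F).

End FPS.

From Pilot Require Import Defs.
From HB Require Import structures.
From mathcomp Require Import all_boot all_order all_algebra.
From mathcomp Require Import boolp.
From mathcomp Require Import ring.
Set Implicit Arguments. Unset Strict Implicit. Unset Printing Implicit Defensive.
Import Order.TTheory GRing.Theory Num.Theory.
Local Open Scope ring_scope.

(* the series inverse of Defs, not fingraph's inverse of an injection *)
Local Notation finv := Defs.finv.

(* Formal series in eps over the differential field (K, d/dt, d/dc) form a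
   commutative ring in which D := eps d/dt is a derivation, and the
   re-expansion f(c) |-> f(c - eps) ([fshift]) is a ring morphism commuting
   with D.  Formal solutions are determined by their constant terms, so:
   (i)  an identity valid in any commutative ring with a derivation shows that
        the Bäcklund image of (lam, nu) solves (H_II) with c replaced by
        c - eps; so does the re-expanded pair; both start with lam_0, and
        6 lam_0^2 + t != 0 makes the linearized equation D^2 d = d X rigid;
   (ii) likewise S + D F / F, F the argument of the logarithm, solves the
        Riccati equation of the Bäcklund image, as does the re-expansion of S,
        and both start with S_0 != 0.
   Order: series ring and inverses; derivations; the shift; uniqueness;
   Bäcklund identities; leading coefficients; the theorem. *)

(* Series are functions nat -> K, compared extensionally; the ring laws are
   checked on polynomial truncations. *)
HB.instance Definition _ (K : fieldType) := Choice.copy (fps K) (nat -> K).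

Section SeriesRing.
Variable K : fieldType.
Implicit Types f g h : fps K.

Lemma fps_ext f g : feq f g -> f = g.
Proof. exact: funext. Qed.

Definition trunc (N : nat) f : {poly K} := \poly_(i < N) f i.

Lemma fmul_trunc N f g n : (n < N)%N -> fmul f g n = (trunc N f * trunc N g)`_n.
Proof.
move=> ltnN; rewrite coefM; apply: eq_bigr => i _.
rewrite !coef_poly (leq_ltn_trans (ltnSE (ltn_ord i)) ltnN).
by rewrite (leq_ltn_trans (leq_subr _ _) ltnN).
Qed.

Lemma fmulA : associative (@fmul K).
Proof.
move=> f g h; apply: fps_ext => n; set P := trunc n.+1.
rewrite (fmul_trunc _ _ (ltnSn n)) [RHS](fmul_trunc _ _ (ltnSn n)).
have -> : (P (fmul f g) * P h)`_n = (P f * P g * P h)`_n.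
  rewrite !coefM; apply: eq_bigr => i _; congr (_ * _).
  by rewrite coef_poly (ltn_ord i); apply: fmul_trunc.
have -> : (P f * P (fmul g h))`_n = (P f * (P g * P h))`_n.
  rewrite !coefM; apply: eq_bigr => i _; congr (_ * _).
  have lt : (n - i < n.+1)%N by rewrite ltnS leq_subr.
  by rewrite coef_poly lt; apply: fmul_trunc.
by rewrite mulrA.
Qed.

Lemma fmulC : commutative (@fmul K).
Proof.
move=> f g; apply: fps_ext => n.
by rewrite (fmul_trunc _ _ (ltnSn n)) [RHS](fmul_trunc _ _ (ltnSn n)) mulrC.
Qed.

Lemma fmul1 : left_id (fC 1) (@fmul K).
Proof.
move=> f; apply: fps_ext => n; rewrite /fmul big_ord_recl mul1r subn0.
by rewrite big1 ?addr0 // => i _; rewrite mul0r.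
Qed.

Lemma fmulDl : left_distributive (@fmul K) (@fadd K).
Proof.
move=> f g h; apply: fps_ext => n; rewrite /fmul /fadd -big_split /=.
by apply: eq_bigr => i _; rewrite mulrDl.
Qed.

Lemma faddA : associative (@fadd K).
Proof. by move=> f g h; apply: fps_ext => n; rewrite /fadd addrA. Qed.
Lemma faddC : commutative (@fadd K).
Proof. by move=> f g; apply: fps_ext => n; rewrite /fadd addrC. Qed.
Lemma fadd0 : left_id (fC 0) (@fadd K).
Proof. by move=> f; apply: fps_ext => -[|n]; rewrite /fadd add0r. Qed.
Lemma faddN : left_inverse (fC 0) (@fopp K) (@fadd K).
Proof. by move=> f; apply: fps_ext => -[|n]; rewrite /fadd /fopp addNr. Qed.
Lemma fC1_neq0 : fC (1 : K) != fC 0.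
Proof. by apply/eqP => /(congr1 (fun f => f 0%N)) /eqP; rewrite oner_eq0. Qed.
End SeriesRing.

HB.instance Definition _ (K : fieldType) :=
  GRing.isZmodule.Build (fps K) (@faddA K) (@faddC K) (@fadd0 K) (@faddN K).
HB.instance Definition _ (K : fieldType) :=
  GRing.Zmodule_isComNzRing.Build (fps K) (@fmulA K) (@fmulC K) (@fmul1 K)
    (@fmulDl K) (@fC1_neq0 K).

Section Coefficients.
Variable K : fieldType.
Implicit Types (f g : fps K) (a b : K).

Lemma coef_add f g n : (f + g) n = f n + g n. Proof. by []. Qed.
Lemma coef_opp f n : (- f) n = - f n. Proof. by []. Qed.
Lemma coef_sub f g n : (f - g) n = f n - g n. Proof. by []. Qed.
Lemma coef_mul f g n : (f * g) n = \sum_(i < n.+1) f i * g (n - i)%N. Proof. by []. Qed.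
Lemma coef_zero n : (0 : fps K) n = 0. Proof. by case: n. Qed.
Lemma coef_mul0 f g : (f * g) 0%N = f 0%N * g 0%N.
Proof. by rewrite coef_mul big_ord1. Qed.

Lemma fCD a b : fC (a + b) = fC a + fC b.
Proof. by apply: fps_ext => -[|n]; rewrite coef_add //= addr0. Qed.
Lemma fCM a b : fC (a * b) = fC a * fC b.
Proof.
apply: fps_ext => n; rewrite coef_mul big_ord_recl subn0 big1 => [|i _]; last first.
  by rewrite /= mul0r.
by case: n => [|n] /=; rewrite ?mulr0 addr0.
Qed.
Lemma fCn m : fC m%:R = m%:R :> fps K.
Proof. by elim: m => [//|m IH]; rewrite -addn1 !natrD fCD IH. Qed.
Lemma coef_nat0 m : (m%:R : fps K) 0%N = m%:R.
Proof. by rewrite -fCn. Qed.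

Lemma coef_eps0 f : (feps K * f) 0%N = 0.
Proof. by rewrite coef_mul0 mul0r. Qed.
Lemma coef_epsS f n : (feps K * f) n.+1 = f n.
Proof.
rewrite coef_mul big_ord_recl /= mul0r add0r big_ord_recl /= mul1r subSS subn0.
by rewrite big1 ?addr0 // => i _; rewrite /feps /= mul0r.
Qed.
End Coefficients.

Section Inverse.
Variable K : fieldType.
Implicit Types f g : fps K.

Lemma size_finv_seq f n : size (finv_seq f n) = n.+1.
Proof. by elim: n => [//|n IH] /=; rewrite size_rcons IH. Qed.

Lemma nth_finv_seq f n i : (i <= n)%N -> nth 0 (finv_seq f n) i = finv f i.
Proof.
elim: n => [|n IH]; first by rewrite leqn0 => /eqP ->.
rewrite leq_eqVlt => /orP [/eqP -> //|]; rewrite ltnS => lt.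
by rewrite /= nth_rcons size_finv_seq ltnS lt IH.
Qed.

Lemma finvS f m :
  finv f m.+1 = - (f 0%N)^-1 * \sum_(i < m.+1) f (m.+1 - i)%N * finv f i.
Proof.
rewrite /finv /= nth_rcons size_finv_seq ltnn eqxx; congr (_ * _).
by apply: eq_bigr => i _; rewrite nth_finv_seq // -ltnS.
Qed.

Lemma mulr_finv f : f 0%N != 0 -> f * finv f = 1.
Proof.
move=> f0; apply: fps_ext => -[|m]; first by rewrite coef_mul0 mulfV.
rewrite mulrC coef_mul big_ord_recr /= subnn finvS mulrAC mulNr mulVf // mulN1r.
by rewrite addrC (eq_bigr _ (fun i _ => mulrC _ _)) addNr.
Qed.

Lemma finv_unique f g : f * g = 1 -> finv f = g.
Proof.
move=> fg; have f0 : f 0%N != 0.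
  apply: contra_eqN (congr1 (fun h => h 0%N) fg) => /eqP f0.
  by rewrite coef_mul0 f0 mul0r eq_sym oner_eq0.
by rewrite -[finv f]mulr1 -fg mulrA [finv f * f]mulrC mulr_finv // mul1r.
Qed.
End Inverse.

(* A derivation of a commutative ring: an additive map obeying Leibniz' rule.
   For K a field this is exactly [is_derivation]. *)
Definition derivation (R : comNzRingType) (D : R -> R) : Prop :=
  (forall x y, D (x + y) = D x + D y) /\ (forall x y, D (x * y) = D x * y + x * D y).

Section DerivationFacts.
Variables (R : comNzRingType) (D : R -> R).
Hypothesis hD : derivation D.

Lemma derD x y : D (x + y) = D x + D y. Proof. exact: hD.1. Qed.
Lemma derM x y : D (x * y) = D x * y + x * D y. Proof. exact: hD.2. Qed.
Lemma der0 : D 0 = 0.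
Proof. by apply: (addrI (D 0)); rewrite addr0 -derD addr0. Qed.
Lemma derN x : D (- x) = - D x.
Proof. by apply/eqP; rewrite -subr_eq0 opprK -derD addNr der0. Qed.
Lemma derB x y : D (x - y) = D x - D y. Proof. by rewrite derD derN. Qed.
Lemma der1 : D 1 = 0.
Proof.
have := derM 1 1; rewrite !mul1r mulr1 => h.
by apply: (addrI (D 1)); rewrite addr0 -h.
Qed.
Lemma der_nat m : D m%:R = 0.
Proof. by elim: m => [|m IH]; rewrite ?der0 // -addn1 natrD derD IH der1 addr0. Qed.
Lemma der_sum (I : Type) (r : seq I) (P : pred I) (F : I -> R) :
  D (\sum_(i <- r | P i) F i) = \sum_(i <- r | P i) D (F i).
Proof. exact: (big_morph D derD der0). Qed.
Lemma der_sign m : D ((-1) ^+ m) = 0.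
Proof.
elim: m => [|m IH]; first by rewrite der1.
by rewrite exprS derM IH derN der1 oppr0 mul0r mulr0 addr0.
Qed.
End DerivationFacts.

Lemma der_inv (K : fieldType) (D : K -> K) (x : K) :
  derivation D -> x != 0 -> D x = 0 -> D x^-1 = 0.
Proof.
move=> hD x0 Dx; have := derM hD x x^-1.
rewrite mulfV // der1 // Dx mul0r add0r => /esym/eqP.
by rewrite mulf_eq0 (negbTE x0) => /eqP.
Qed.

(* A derivation D of K acts coefficientwise on series, and eps * D is again a
   derivation: it is the operator  eta^{-1} d/dt  of (H_II). *)
Section SeriesDerivation.
Variables (K : fieldType) (D : K -> K).
Hypothesis hD : derivation D.
Implicit Types f g : fps K.

Lemma fder_derivation : derivation (fder D).
Proof.
split=> f g; apply: fps_ext => n; first by rewrite /fder coef_add derD.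
rewrite /fder coef_add !coef_mul der_sum // -big_split /=.
by apply: eq_bigr => i _; rewrite derM.
Qed.

Lemma fderC a : fder D (fC a) = fC (D a).
Proof. by apply: fps_ext => -[|n] //=; rewrite /fder /= der0. Qed.

Lemma fder_eps : fder D (feps K) = 0.
Proof.
apply: fps_ext => n; rewrite /fder /feps coef_zero.
by case: (n == 1)%N; rewrite ?der1 ?der0.
Qed.

Definition epsD f : fps K := feps K * fder D f.

Lemma epsD_derivation : derivation epsD.
Proof.
have [fD fM] := fder_derivation.
by split=> f g; rewrite /epsD ?fD ?fM; ring.
Qed.

Lemma epsD_const a : D a = 0 -> epsD (fC a) = 0.
Proof. by move=> Da; rewrite /epsD fderC Da mulr0. Qed.
Lemma epsD_eps : epsD (feps K) = 0.
Proof. by rewrite /epsD fder_eps mulr0. Qed.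

Lemma coef_epsD0 f : epsD f 0%N = 0.
Proof. exact: coef_eps0. Qed.
Lemma coef_epsD_vanish f n :
  (forall k, (k <= n)%N -> f k = 0) -> epsD f n.+1 = 0.
Proof. by move=> f0; rewrite /epsD coef_epsS /fder f0 // der0. Qed.
End SeriesDerivation.

(* d/d(eps) on series, a derivation of the series ring; it drives the
   induction showing that the re-expansion [fshift] is multiplicative. *)
Section EpsDerivative.
Variable K : fieldType.
Implicit Types f g : fps K.

Definition fdeps f : fps K := fun n => f n.+1 *+ n.+1.

Lemma sum_weight_split (A : nat -> K) n :
  (\sum_(i < n.+2) A i) * n.+1%:R =
  \sum_(j < n.+1) A j.+1 * j.+1%:R + \sum_(i < n.+1) A i * (n.+1 - i)%:R.
Proof.
rewrite mulr_suml (eq_bigr (fun i : 'I_n.+2 => A i * i%:R + A i * (n.+1 - i)%:R)).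
  rewrite big_split /= big_ord_recl mulr0 add0r; congr (_ + _).
  by rewrite big_ord_recr /= subnn mulr0 addr0.
by move=> i _; rewrite -mulrDr -natrD subnKC // -ltnS.
Qed.

Lemma fdepsM f g : fdeps (f * g) = fdeps f * g + f * fdeps g.
Proof.
apply: fps_ext => n; rewrite /fdeps coef_add !coef_mul -mulr_natr.
rewrite (sum_weight_split (fun i => f i * g (n.+1 - i)%N)); congr (_ + _).
  by apply: eq_bigr => i _; rewrite subSS mulr_natr mulrnAl.
apply: eq_bigr => i _; rewrite mulr_natr -mulrnAr.
by rewrite subSn // -ltnS.
Qed.
End EpsDerivative.

Section Shift.
Variables (K : fieldType) (Dc : K -> K).
Hypothesis hDc : derivation Dc.
Hypothesis char0 : [pchar K] =i pred0.
Implicit Types f g : fps K.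

Lemma natr_neq0 m : (m.+1%:R : K) != 0.
Proof. by have /pcharf0P -> := char0. Qed.

Definition taylor_coef m : K := (-1) ^+ m / (m`!)%:R.
Definition taylor_term m x : K := taylor_coef m * iter m Dc x.

Lemma fshiftE f n : fshift Dc f n = \sum_(k < n.+1) taylor_term (n - k) (f k).
Proof. by []. Qed.

Lemma fact_neq0 m : ((m`!)%:R : K) != 0.
Proof. by rewrite -(prednK (fact_gt0 m)) natr_neq0. Qed.

(* the Taylor coefficients are rational numbers, killed by any derivation *)
Lemma der_taylor_coef D m : derivation D -> D (taylor_coef m) = 0.
Proof.
by move=> hD; rewrite (derM hD) (der_sign hD) (der_inv hD (fact_neq0 m) (der_nat hD _)) mul0r mulr0 addr0.
Qed.

Lemma taylor_coefS m : taylor_coef m.+1 *+ m.+1 = - taylor_coef m.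
Proof.
have m0 := natr_neq0 m; have f0 := fact_neq0 m.
rewrite /taylor_coef -mulr_natr factS natrM exprS.
by field; rewrite f0 addrC natr1 m0.
Qed.

Lemma taylor_termS m x : taylor_term m.+1 x *+ m.+1 = - Dc (taylor_term m x).
Proof.
rewrite /taylor_term -mulrnAl taylor_coefS (derM hDc) (der_taylor_coef _ hDc).
by rewrite mul0r add0r iterS mulNr.
Qed.

Lemma iter_derD m x y : iter m Dc (x + y) = iter m Dc x + iter m Dc y.
Proof. by elim: m => [//|m IH]; rewrite !iterS IH (derD hDc). Qed.
Lemma iter_der0 m : iter m Dc 0 = 0.
Proof. by elim: m => [//|m IH]; rewrite iterS IH (der0 hDc). Qed.

Lemma taylor_termD m x y : taylor_term m (x + y) = taylor_term m x + taylor_term m y.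
Proof. by rewrite /taylor_term iter_derD mulrDr. Qed.
Lemma taylor_term0 m : taylor_term m 0 = 0.
Proof. by rewrite /taylor_term iter_der0 mulr0. Qed.
Lemma taylor_termMn m x k : taylor_term m (x *+ k) = taylor_term m x *+ k.
Proof.
elim: k => [|k IH]; first by rewrite !mulr0n taylor_term0.
by rewrite !mulrS taylor_termD IH.
Qed.

Lemma fshift_coef0 f : fshift Dc f 0%N = f 0%N.
Proof. by rewrite fshiftE big_ord1 /taylor_term /taylor_coef /= divr1 mul1r. Qed.

Lemma fshiftD f g : fshift Dc (f + g) = fshift Dc f + fshift Dc g.
Proof.
apply: fps_ext => n; rewrite coef_add !fshiftE -big_split.
by apply: eq_bigr => i _; rewrite taylor_termD.
Qed.

Lemma fshiftN f : fshift Dc (- f) = - fshift Dc f.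
Proof.
apply/eqP; rewrite -subr_eq0 opprK -fshiftD addNr; apply/eqP.
apply: fps_ext => n; rewrite fshiftE coef_zero big1 // => i _.
by rewrite coef_zero taylor_term0.
Qed.

Lemma fshiftB f g : fshift Dc (f - g) = fshift Dc f - fshift Dc g.
Proof. by rewrite fshiftD fshiftN. Qed.

Lemma fshift_fdeps_coef f n :
  fshift Dc f n.+1 * n.+1%:R = fshift Dc (fdeps f) n - Dc (fshift Dc f n).
Proof.
have first_sum : \sum_(j < n.+1) taylor_term (n.+1 - j.+1) (f j.+1) * j.+1%:R
    = fshift Dc (fdeps f) n.
  by apply: eq_bigr => i _; rewrite /fdeps subSS mulr_natr -taylor_termMn.
have second_sum : \sum_(i < n.+1) taylor_term (n.+1 - i) (f i) * (n.+1 - i)%:R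
    = - Dc (fshift Dc f n).
  rewrite fshiftE (der_sum hDc) -sumrN; apply: eq_bigr => i _.
  by rewrite subSn 1?mulr_natr ?taylor_termS // -ltnS.
by rewrite fshiftE (sum_weight_split (fun k => taylor_term (n.+1 - k) (f k))) first_sum second_sum.
Qed.

Lemma fshift_fdeps f : fshift Dc (fdeps f) = fdeps (fshift Dc f) + fder Dc (fshift Dc f).
Proof.
apply: fps_ext => k; rewrite coef_add /fdeps -mulr_natr fshift_fdeps_coef.
by rewrite /fder subrK.
Qed.

(* by induction on the degree, using the Leibniz rule for d/d(eps) *)
Lemma fshiftM f g : fshift Dc (f * g) = fshift Dc f * fshift Dc g.
Proof.
have [_ fM] := fder_derivation hDc.
suff eqn n : forall f g, fshift Dc (f * g) n = (fshift Dc f * fshift Dc g) n.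
  by apply: fps_ext => n; apply: eqn.
elim: n => [|n IH] {}f {}g; first by rewrite fshift_coef0 !coef_mul0 !fshift_coef0.
apply: (mulIf (natr_neq0 n)); rewrite fshift_fdeps_coef fdepsM fshiftD coef_add !IH.
rewrite !fshift_fdeps.
set F := fshift Dc f; set G := fshift Dc g.
have -> : Dc ((F * G) n) = fder Dc (F * G) n by [].
have -> : (F * G) n.+1 * n.+1%:R = fdeps (F * G) n by rewrite mulr_natr.
rewrite fM fdepsM.
transitivity (((fdeps F + fder Dc F) * G + F * (fdeps G + fder Dc G)
               - (fder Dc F * G + F * fder Dc G)) n); first by [].
by apply: (congr1 (fun h : fps K => h n)); ring.
Qed.

End Shift.

Section ShiftValues.
Variables (K : fieldType) (Dt Dc : K -> K).
Hypotheses (hDt : derivation Dt) (hDc : derivation Dc).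
Hypothesis Dt_Dc : forall x, Dt (Dc x) = Dc (Dt x).
Hypothesis char0 : [pchar K] =i pred0.
Implicit Types f g : fps K.

Lemma fshiftC a n : fshift Dc (fC a) n = taylor_term Dc n a.
Proof.
rewrite fshiftE big_ord_recl subn0 big1 ?addr0 // => i _.
by rewrite /taylor_term iter_der0 // mulr0.
Qed.

Lemma iterS_der_const m a : Dc a = 0 -> iter m.+1 Dc a = 0.
Proof. by move=> Da; rewrite iterSr Da iter_der0. Qed.

Lemma fshift_const a : Dc a = 0 -> fshift Dc (fC a) = fC a.
Proof.
move=> Da; apply: fps_ext => -[|n]; rewrite fshiftC /taylor_term.
  by rewrite /taylor_coef /= divr1 mul1r.
by rewrite iterS_der_const // mulr0.
Qed.

Lemma fshift_param a : Dc a = 1 -> fshift Dc (fC a) = fC a - feps K.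
Proof.
move=> Da; apply: fps_ext => -[|[|n]]; rewrite coef_sub fshiftC /taylor_term.
- by rewrite /taylor_coef /= divr1 mul1r subr0.
- by rewrite /taylor_coef /= Da divr1 mulr1 add0r.
- by rewrite iterSr Da iterS_der_const ?der1 // mulr0 subrr.
Qed.

Lemma fshift_nat m : fshift Dc m%:R = m%:R.
Proof. by rewrite -fCn fshift_const // der_nat. Qed.

Lemma fshift_eps : fshift Dc (feps K) = feps K.
Proof.
apply: fps_ext => -[|[|n]]; rewrite fshiftE.
- by rewrite big_ord1 /taylor_term /feps /= mulr0.
- rewrite big_ord_recr big_ord1 /taylor_term /taylor_coef /feps /= der0 //.
  by rewrite mulr0 add0r subnn divr1 !mulr1.
- rewrite big1 // => i _; rewrite /taylor_term /feps.
  case: eqP => [->|_]; last by rewrite iter_der0 // mulr0.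
  by rewrite subSS subn0 iterS_der_const ?der1 // mulr0.
Qed.

Lemma iter_Dt_Dc m x : Dt (iter m Dc x) = iter m Dc (Dt x).
Proof. by elim: m => [//|m IH]; rewrite !iterS Dt_Dc IH. Qed.

Lemma fshift_fder f : fshift Dc (fder Dt f) = fder Dt (fshift Dc f).
Proof.
apply: fps_ext => n; rewrite /fder !fshiftE (der_sum hDt); apply: eq_bigr => i _.
by rewrite /taylor_term (derM hDt) der_taylor_coef // mul0r add0r iter_Dt_Dc.
Qed.

Lemma fshift_epsD f : fshift Dc (epsD Dt f) = epsD Dt (fshift Dc f).
Proof. by rewrite /epsD fshiftM // fshift_eps fshift_fder. Qed.
End ShiftValues.

(* Formal solutions of the equations at hand are determined by their constant
   terms: a difference d with d_0 = 0 of two solutions satisfies a linear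
   equation whose coefficient X has X_0 != 0, and eps d/dt only sees the lower
   coefficients of d. *)
Section Uniqueness.
Variables (K : fieldType) (Dt : K -> K).
Hypothesis hDt : derivation Dt.
Implicit Types d X U V W : fps K.
Local Notation D := (epsD Dt).

Lemma vanish_by_induction d X : X 0%N != 0 -> d 0%N = 0 ->
  (forall n, (forall k, (k <= n)%N -> d k = 0) -> (d * X) n.+1 = 0) -> d = 0.
Proof.
move=> X0 d0 step; suff low n : forall k, (k <= n)%N -> d k = 0.
  by apply: fps_ext => n; rewrite coef_zero (low n).
elim: n => [|n IH] k; first by rewrite leqn0 => /eqP ->.
rewrite leq_eqVlt => /orP [/eqP ->|]; last by rewrite ltnS; apply: IH.
have := step n IH; rewrite coef_mul big_ord_recr /= subnn big1 ?add0r.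
  by move/eqP; rewrite mulf_eq0 (negbTE X0) orbF => /eqP.
by move=> i _; rewrite IH ?mul0r // -ltnS.
Qed.

Lemma linear_ode1_uniq d X : X 0%N != 0 -> d 0%N = 0 -> d * X + D d = 0 -> d = 0.
Proof.
move=> X0 d0 eq; apply: (vanish_by_induction X0 d0) => n low.
have -> : d * X = - D d by apply/eqP; rewrite -subr_eq0 opprK eq.
by rewrite coef_opp coef_epsD_vanish ?oppr0.
Qed.

Lemma linear_ode2_uniq d X : X 0%N != 0 -> d 0%N = 0 -> D (D d) = d * X -> d = 0.
Proof.
move=> X0 d0 eq; apply: (vanish_by_induction X0 d0) => n low.
rewrite -eq coef_epsD_vanish // => -[|k] le_kn; first exact: coef_epsD0.
by rewrite coef_epsD_vanish // => j le_jk; apply: low; rewrite (leq_trans le_jk) // ltnW.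
Qed.

Lemma riccati_uniq U V W : U 0%N = V 0%N -> U 0%N + V 0%N != 0 ->
  U * U + D U = W -> V * V + D V = W -> U = V.
Proof.
move=> UV0 X0 eqU eqV; apply/eqP; rewrite -subr_eq0; apply/eqP.
apply: (linear_ode1_uniq (X := U + V)) => //; first by rewrite coef_sub UV0 subrr.
rewrite (derB (epsD_derivation hDt)).
transitivity ((U * U + D U) - (V * V + D V)); first by ring.
by rewrite eqU eqV subrr.
Qed.

Lemma painleve_uniq L1 M1 L2 M2 A B :
  D L1 = M1 -> D M1 = 2%:R * L1 ^+ 3 + A * L1 + B ->
  D L2 = M2 -> D M2 = 2%:R * L2 ^+ 3 + A * L2 + B ->
  L1 0%N = L2 0%N -> 6%:R * L1 0%N ^+ 2 + A 0%N != 0 -> L1 = L2 /\ M1 = M2.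
Proof.
have hD := epsD_derivation hDt.
move=> eqL1 eqM1 eqL2 eqM2 L0 X0.
set X := 2%:R * (L1 * L1 + L1 * L2 + L2 * L2) + A.
have X0' : X 0%N != 0.
  suff -> : X 0%N = 6%:R * L1 0%N ^+ 2 + A 0%N by [].
  by rewrite /X coef_add !coef_mul0 coef_nat0 !coef_add !coef_mul0 -L0; ring.
have LL : L1 = L2.
  apply/eqP; rewrite -subr_eq0; apply/eqP.
  apply: (linear_ode2_uniq X0'); first by rewrite coef_sub L0 subrr.
  by rewrite !(derB hD) eqL1 eqL2 eqM1 eqM2 /X; ring.
by split=> //; rewrite -eqL1 -eqL2 LL.
Qed.
End Uniqueness.

Lemma riccati_log_gauge (R : comNzRingType) (D : R -> R) (S F Fi : R) :
  derivation D -> F * Fi = 1 ->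
  (S + D F * Fi) * (S + D F * Fi) + D (S + D F * Fi)
  = S * S + D S + (2%:R * S * D F + D (D F)) * Fi.
Proof.
move=> hD FFi; have DFi : D Fi = - (Fi * Fi) * D F.
  have := derM hD F Fi; rewrite FFi der1 // => /esym eq0.
  apply/eqP; rewrite -subr_eq0; apply/eqP.
  transitivity ((D F * Fi + F * D Fi) * Fi - D Fi * (F * Fi - 1)); first by ring.
  by rewrite eq0 FFi; ring.
by rewrite (derD hD) (derM hD) DFi; ring.
Qed.

(* The algebraic heart of the Bäcklund transformation, in any commutative ring
   with a derivation D (later D = eps d/dt on series).  T stands for t/2 and
   E = D T for eps/2; h = c - eps/2 is a constant; q inverts nu - lam^2 - T.
   The pair (lam, nu) solves  D lam = nu,  D nu = 2 lam^3 + 2 T lam + (h + E);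
   its Bäcklund image  Lam = -lam + h q  solves the same system with h + E
   replaced by h - E, i.e. c by c - eps. *)
Section BacklundIdentities.
Variables (R : comNzRingType) (D : R -> R).
Hypothesis hD : derivation D.
Variables lam nu q T h E : R.
Hypothesis D_lam : D lam = nu.
Hypothesis D_nu : D nu = 2%:R * lam ^+ 3 + 2%:R * T * lam + (h + E).
Hypotheses (D_T : D T = E) (D_h : D h = 0).
Hypothesis q_inv : q * (nu - lam * lam - T) = 1.

Lemma der_q : D q = 2%:R * lam * q - h * (q * q).
Proof.
have := derM hD q (nu - lam * lam - T); rewrite q_inv der1 //.
rewrite !(derB hD) (derM hD) D_lam D_nu D_T => /esym eq0.
apply/eqP; rewrite -subr_eq0; apply/eqP.
transitivity ((D q * (nu - lam * lam - T) + q * (2%:R * lam ^+ 3 + 2%:R * T * lam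
  + (h + E) - (nu * lam + lam * nu) - E)) * q
  - (D q - 2%:R * lam * q) * (q * (nu - lam * lam - T) - 1)); first by ring.
by rewrite eq0 q_inv; ring.
Qed.

Local Notation Lam := (- lam + h * q).
Local Notation Nu := (- nu + 2%:R * (h * q * lam) - h * q * (h * q)).

Ltac expand_der :=
  rewrite ?(derD hD, derB hD, derN hD, derM hD, der0 hD, der1 hD, der_nat hD,
            D_lam, D_nu, D_T, D_h, der_q).

Lemma backlund_lam : D Lam = Nu.
Proof. by expand_der; ring. Qed.

Lemma backlund_nu : D Nu = 2%:R * Lam ^+ 3 + 2%:R * T * Lam + (h - E).
Proof.
expand_der; transitivity ((q * (nu - lam * lam - T) - 1) * (2%:R * h)
  + (2%:R * Lam ^+ 3 + 2%:R * T * Lam + (h - E))); first by ring.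
by rewrite q_inv subrr mul0r add0r.
Qed.

(* S solves the Riccati equation of lam (S = eta^{-1} R); F is the argument of
   the logarithm in (ii) *)
Variable S : R.
Hypothesis D_S : D S = 6%:R * (lam * lam) + 2%:R * T - S * S.
Local Notation F := (1 + h * ((S - 2%:R * lam) * (q * q))).

Lemma backlund_log_factor :
  2%:R * S * D F + D (D F) = 6%:R * (Lam * Lam - lam * lam) * F.
Proof.
do 2 (expand_der; rewrite ?D_S).
transitivity ((q * (nu - lam * lam - T) - 1) *
   (- 12%:R * lam * q * h + 8%:R * q ^+ 2 * h ^+ 2)
   + 6%:R * (Lam * Lam - lam * lam) * F); first by ring.
by rewrite q_inv subrr mul0r add0r.
Qed.

Lemma backlund_riccati Fi : F * Fi = 1 ->
  (S + D F * Fi) * (S + D F * Fi) + D (S + D F * Fi)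
  = 6%:R * (Lam * Lam) + 2%:R * T.
Proof.
move=> FFi; rewrite riccati_log_gauge // backlund_log_factor D_S.
transitivity (6%:R * (Lam * Lam) + 2%:R * T
   + 6%:R * (Lam * Lam - lam * lam) * (F * Fi - 1)); first by ring.
by rewrite FFi subrr mulr0 addr0.
Qed.
End BacklundIdentities.

(* Differentiating  2 l^3 + t l + c = 0  in c shows that the discriminant
   6 l^2 + t of the cubic cannot vanish at the root l. *)
Lemma cubic_discriminant_neq0 (K : fieldType) (Dc : K -> K) (t c l : K) :
  derivation Dc -> Dc t = 0 -> Dc c = 1 ->
  2%:R * l ^+ 3 + t * l + c = 0 -> 6%:R * l ^+ 2 + t != 0.
Proof.
move=> hD Dc_t Dc_c cubic; apply/eqP => disc.
have := congr1 Dc cubic; rewrite exprS expr2 (der0 hD) !(derD hD) !(derM hD).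
rewrite Dc_t Dc_c (der_nat hD) => /eqP; apply/negP.
have -> : 0 * (l * (l * l)) + 2%:R * (Dc l * (l * l) + l * (Dc l * l + l * Dc l))
    + (0 * l + t * Dc l) + 1 = (6%:R * l ^+ 2 + t) * Dc l + 1 by ring.
by rewrite disc mul0r add0r oner_eq0.
Qed.

(* the leading coefficient of the argument of the logarithm in (ii) is a unit:
   with Q0 = -l^2 - t/2 and c = 2 l Q0 it equals -(s - 2 l)^2 / (2 Q0), and
   s = 2 l would force Q0 = 0 *)
Lemma log_arg_coef0_neq0 (K : fieldType) (l s t c Q0 : K) :
  (2%:R : K) != 0 -> s ^+ 2 = 6%:R * l ^+ 2 + t ->
  Q0 = - (l * l) - t / 2%:R -> Q0 != 0 -> c = 2%:R * l * Q0 ->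
  1 + c * ((s - 2%:R * l) * (Q0^-1 * Q0^-1)) != 0.
Proof.
move=> two0 s_sq Q0E Q0_neq0 ->.
have Q0_val : Q0 = (4%:R * l ^+ 2 - s ^+ 2) / 2%:R by rewrite Q0E s_sq; field.
have N_neq0 : 4%:R * l ^+ 2 - s ^+ 2 != 0.
  by apply: contra Q0_neq0 => /eqP N0; rewrite Q0_val N0 mul0r.
have -> : 1 + 2%:R * l * Q0 * ((s - 2%:R * l) * (Q0^-1 * Q0^-1))
    = - (s - 2%:R * l) ^+ 2 / (4%:R * l ^+ 2 - s ^+ 2).
  by rewrite Q0_val; field; rewrite N_neq0 two0.
rewrite mulf_eq0 invr_eq0 (negbTE N_neq0) orbF oppr_eq0 expf_eq0 /=.
by apply: contra N_neq0; rewrite subr_eq0 => /eqP ->; apply/eqP; ring.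
Qed.

Section PainleveII.
Variables (K : fieldType) (Dt Dc : K -> K) (t c : K) (lam nu S : fps K).
Hypothesis char0 : [pchar K] =i pred0.
Hypotheses (hDt : derivation Dt) (hDc : derivation Dc).
Hypothesis Dt_Dc : forall x, Dt (Dc x) = Dc (Dt x).
Hypotheses (Dt_t : Dt t = 1) (Dc_t : Dc t = 0) (Dt_c : Dt c = 0) (Dc_c : Dc c = 1).
Hypothesis c_neq0 : c != 0.
Hypothesis lam0_root : 2%:R * lam 0%N ^+ 3 + t * lam 0%N + c = 0.
Hypothesis nu0 : nu 0%N = 0.
Hypothesis lam_eq : feq (fmul (feps K) (fder Dt lam)) nu.
Hypothesis nu_eq : feq (fmul (feps K) (fder Dt nu))
  (fadd (fmul (fC 2%:R) (fmul lam (fmul lam lam))) (fadd (fmul (fC t) lam) (fC c))).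
Hypothesis S0_sq : S 0%N ^+ 2 = 6%:R * lam 0%N ^+ 2 + t.
Hypothesis S_eq : feq (fadd (fmul S S) (fmul (feps K) (fder Dt S)))
  (fadd (fmul (fC 6%:R) (fmul lam lam)) (fC t)).

Local Notation D := (epsD Dt).
Local Notation eps := (feps K).
(* T = t/2 and E = eps/2 = D T, so that c = h + E and c - eps = h - E *)
Local Notation T := (fC (t / 2%:R)).
Local Notation E := (fC 2%:R^-1 * feps K).
Local Notation h := (chalf c).
Local Notation Q := (Qden t lam nu).
Local Notation q := (finv Q).
Local Notation L := (fshift Dc lam).
Local Notation M := (fshift Dc nu).

Lemma two_neq0 : (2%:R : K) != 0.
Proof. exact: natr_neq0. Qed.

Lemma Dc_half : Dc 2%:R^-1 = 0.
Proof. exact: der_inv hDc two_neq0 (der_nat hDc 2). Qed.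
Lemma Dt_half : Dt 2%:R^-1 = 0.
Proof. exact: der_inv hDt two_neq0 (der_nat hDt 2). Qed.

Lemma twice_T : 2%:R * T = fC t.
Proof. by rewrite -fCn -fCM mulrC divfK // two_neq0. Qed.
Lemma twice_E : 2%:R * E = eps.
Proof. by rewrite mulrA -fCn -fCM mulfV ?two_neq0 // mul1r. Qed.
Lemma h_plus_E : h + E = fC c.
Proof. exact: subrK. Qed.

Lemma D_lam : D lam = nu.
Proof. exact: fps_ext. Qed.
Lemma D_nu : D nu = 2%:R * lam ^+ 3 + 2%:R * T * lam + (h + E).
Proof.
transitivity (fC 2%:R * (lam * (lam * lam)) + (fC t * lam + fC c)); first exact: fps_ext.
by rewrite fCn -twice_T -h_plus_E; ring.
Qed.
Lemma D_S : D S = 6%:R * (lam * lam) + 2%:R * T - S * S.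
Proof.
apply: (addrI (S * S)); transitivity (fC 6%:R * (lam * lam) + fC t).
  exact: fps_ext.
by rewrite fCn -twice_T; ring.
Qed.
Lemma D_T : D T = E.
Proof.
rewrite /epsD (fderC hDt) (derM hDt) Dt_t Dt_half mulr0 addr0 mul1r.
by rewrite mulrC.
Qed.
Lemma D_E : D E = 0.
Proof.
have [_ DM] := epsD_derivation hDt.
by rewrite DM (epsD_const hDt Dt_half) (epsD_eps hDt) mul0r mulr0 addr0.
Qed.
Lemma D_h : D h = 0.
Proof.
by rewrite -[h](addrK E) h_plus_E (derB (epsD_derivation hDt)) D_E (epsD_const hDt Dt_c) subr0.
Qed.

Lemma Q_coef0 : Q 0%N = - (lam 0%N * lam 0%N) - t / 2%:R.
Proof.
have -> : Q 0%N = nu 0%N - (lam * lam) 0%N - t / 2%:R by [].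
by rewrite coef_mul0 nu0 sub0r.
Qed.

Lemma c_factor : c = 2%:R * lam 0%N * Q 0%N.
Proof.
apply: (addrI (2%:R * lam 0%N ^+ 3 + t * lam 0%N)); rewrite lam0_root Q_coef0.
by field; rewrite two_neq0.
Qed.

Lemma Q_coef0_neq0 : Q 0%N != 0.
Proof. by apply: contraNneq c_neq0 => Q0; rewrite c_factor Q0 mulr0. Qed.

Lemma q_inv : q * (nu - lam * lam - T) = 1.
Proof. by rewrite mulrC; apply: mulr_finv; apply: Q_coef0_neq0. Qed.

Lemma h_coef0 : h 0%N = c.
Proof.
have -> : h 0%N = c - (fC 2%:R^-1 * eps) 0%N by [].
by rewrite coef_mul0 /= mulr0 subr0.
Qed.

Lemma discriminant_neq0 : 6%:R * lam 0%N ^+ 2 + t != 0.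
Proof. exact: cubic_discriminant_neq0 hDc Dc_t Dc_c lam0_root. Qed.

Lemma S_coef0_neq0 : S 0%N != 0.
Proof.
by apply: contraNneq discriminant_neq0 => S0; rewrite -S0_sq S0 expr2 mulr0.
Qed.

Lemma shift_D f : fshift Dc (D f) = D (fshift Dc f).
Proof. exact: fshift_epsD. Qed.

Lemma fshift_T : fshift Dc T = T.
Proof.
by rewrite fshift_const // (derM hDc) Dc_t Dc_half mul0r mulr0 addr0.
Qed.

Lemma c_minus_eps : fC c - eps = h - E.
Proof. by rewrite -[in LHS]twice_E -h_plus_E; ring. Qed.

Lemma D_L : D L = M.
Proof. by rewrite -shift_D D_lam. Qed.

Lemma D_M : D M = 2%:R * L ^+ 3 + 2%:R * T * L + (h - E).
Proof.
rewrite -shift_D D_nu h_plus_E !fshiftD // !fshiftM // fshift_nat // fshift_T.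
by rewrite fshift_param // c_minus_eps; ring.
Qed.

(* Part (i): the Bäcklund image of (lam, nu) and the re-expanded pair (L, M)
   solve the same system and both start with lam_0, so they coincide. *)
Lemma backlund_shift : BLam t c lam nu = L /\ BNu t c lam nu = M.
Proof.
have hD := epsD_derivation hDt.
have Lam_eq := backlund_lam hD D_lam D_nu D_T D_h q_inv.
have Nu_eq := backlund_nu hD D_lam D_nu D_T D_h q_inv.
have Lam0 : (- lam + h * q) 0%N = lam 0%N.
  rewrite coef_add coef_opp coef_mul0 h_coef0 [c]c_factor -mulrA.
  by rewrite [q 0%N]/= mulfV ?Q_coef0_neq0 // mulr1; ring.
have X0 : 6%:R * (- lam + h * q) 0%N ^+ 2 + (2%:R * T) 0%N != 0.
  by rewrite Lam0 twice_T discriminant_neq0.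
have [Lam_L Nu_M] := painleve_uniq hDt Lam_eq Nu_eq D_L D_M
  (etrans Lam0 (esym (fshift_coef0 Dc lam))) X0.
by split; [exact: Lam_L | rewrite -Nu_M /BNu fCn].
Qed.

Lemma Farg_eq : Farg t c lam nu S = 1 + h * ((S - 2%:R * lam) * (q * q)).
Proof.
have QQ : Q * Q * (q * q) = 1.
  by rewrite mulrACA -[Q * q]mulrC q_inv mulr1.
by rewrite /Farg (finv_unique QQ) fCn.
Qed.

Lemma Farg_coef0_neq0 : (1 + h * ((S - 2%:R * lam) * (q * q))) 0%N != 0.
Proof.
rewrite coef_add !coef_mul0 coef_sub coef_mul0 coef_nat0 h_coef0 [q 0%N]/=.
exact: log_arg_coef0_neq0 two_neq0 S0_sq Q_coef0 Q_coef0_neq0 c_factor.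
Qed.

(* Part (ii): S + D F / F and the re-expansion of S solve the same Riccati
   equation (attached to Lam = L) and both start with S_0 != 0. *)
Lemma riccati_shift : S - fshift Dc S = - (eps * fdlog Dt (Farg t c lam nu S)).
Proof.
have hD := epsD_derivation hDt.
rewrite Farg_eq; set F := 1 + _; set Fi := finv F.
have FFi : F * Fi = 1 by apply: mulr_finv; apply: Farg_coef0_neq0.
have U_eq := backlund_riccati hD D_lam D_nu D_T D_h q_inv D_S FFi.
rewrite (_ : - lam + h * q = L) in U_eq; last exact: backlund_shift.1.
have V_eq : fshift Dc S * fshift Dc S + D (fshift Dc S) = 6%:R * (L * L) + 2%:R * T.
  rewrite -shift_D D_S !fshiftB // !fshiftD // !fshiftM // !fshift_nat // fshift_T.
  by ring.
have U0 : (S + D F * Fi) 0%N = S 0%N by rewrite coef_add coef_mul0 coef_epsD0 mul0r addr0.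
have UV0 : (S + D F * Fi) 0%N + fshift Dc S 0%N != 0.
  by rewrite U0 fshift_coef0 -mulr2n -mulr_natl mulf_neq0 ?two_neq0 ?S_coef0_neq0.
rewrite -(riccati_uniq hDt (etrans U0 (esym (fshift_coef0 Dc S))) UV0 U_eq V_eq).
have -> : fdlog Dt F = fder Dt F * Fi by [].
by rewrite /epsD; ring.
Qed.
End PainleveII.

Theorem mainTheorem5 (K : fieldType) (Dt Dc : K -> K) (t c : K)
    (lam nu S : fps K) :
  [pchar K] =i pred0 ->
  is_derivation Dt -> is_derivation Dc ->
  (forall x, Dt (Dc x) = Dc (Dt x)) ->
  Dt t = 1 -> Dc t = 0 -> Dt c = 0 -> Dc c = 1 ->
  c != 0 ->
  2%:R * lam 0%N ^+ 3 + t * lam 0%N + c = 0 ->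
  nu 0%N = 0 ->
  feq (fmul (feps K) (fder Dt lam)) nu ->
  feq (fmul (feps K) (fder Dt nu))
      (fadd (fmul (fC 2%:R) (fmul lam (fmul lam lam)))
            (fadd (fmul (fC t) lam) (fC c))) ->
  S 0%N ^+ 2 = 6%:R * lam 0%N ^+ 2 + t ->
  feq (fadd (fmul S S) (fmul (feps K) (fder Dt S)))
      (fadd (fmul (fC 6%:R) (fmul lam lam)) (fC t)) ->
  (feq (BLam t c lam nu) (fshift Dc lam) /\
   feq (BNu t c lam nu) (fshift Dc nu)) /\
  feq (fsub S (fshift Dc S))
      (fopp (fmul (feps K) (fdlog Dt (Farg t c lam nu S)))).
Proof.
move=> char0 hDt hDc Dt_Dc Dt_t Dc_t Dt_c Dc_c c_neq0 lam0_root nu0 lam_eq nu_eq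
  S0_sq S_eq.
have [BLam_shift BNu_shift] := backlund_shift char0 hDt hDc Dt_Dc Dt_t Dc_t Dt_c
  Dc_c c_neq0 lam0_root nu0 lam_eq nu_eq.
have S_shift := riccati_shift char0 hDt hDc Dt_Dc Dt_t Dc_t Dt_c Dc_c c_neq0
  lam0_root nu0 lam_eq nu_eq S0_sq S_eq.
by split; [split|] => n; [rewrite BLam_shift | rewrite BNu_shift
                          | exact: (congr1 (fun f : fps K => f n) S_shift)].
Qed.
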